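(* Let $\mathbb{X},\mathbb{Y}$ be real normed linear spaces and $T\in\mathbb{B}(\mathbb{X},\mathbb{Y})$ with $T\neq0$ and $M_T\neq\emptyset$. Then $T$ is a smooth point of $\mathbb{B}(\mathbb{X},\mathbb{Y})$ if and only if all of the following hold: (i) $M_T=\{\pm x_0\}$ for some $x_0\in S_{\mathbb{X}}$; (ii) $Tx_0$ is a smooth point of $\mathbb{Y}$; (iii) for every $A\in\mathbb{B}(\mathbb{X},\mathbb{Y})$, $T\perp_B A$ if and only if $Tx_0\perp_B Ax_0$.
   Context: All spaces are real; $\mathbb{B}(\mathbb{X},\mathbb{Y})$ has the operator norm; $S_{\mathbb{X}}$ is the unit sphere; $M_T=\{x\in S_{\mathbb{X}}:\|Tx\|=\|T\|\}$. A nonzero element $x$ of a normed space $\mathbb{Z}$ is smooth if there is a unique $f\in\mathbb{Z}^*$ with $\|f\|=1$ and $f(x)=\|x\|$. $x\perp_B y$ means $\|x+\lambda y\|\ge\|x\|$ for all $\lambda\in\mathbb{R}$. *)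

From Stdlib Require Import Reals Lra ClassicalEpsilon.
Open Scope R_scope.

(* Supremum of a set of reals (the lub when it exists; 0 otherwise, a
   junk value never used for bounded nonempty sets). *)
Definition Rsup (E : R -> Prop) : R :=
  match excluded_middle_informative (bound E /\ exists x, E x) with
  | left H => proj1_sig (completeness E (proj1 H) (proj2 H))
  | right _ => 0
  end.

Record NStruct := {
  car :> Type;
  nzero : car;
  nadd : car -> car -> car;
  nscal : R -> car -> car;
  nnorm : car -> R }.

Arguments nzero {_}.
Arguments nadd {_}.
Arguments nscal {_}.
Arguments nnorm {_}.

Record NormedSpace := {
  ns :> NStruct;
  add_assoc : forall x y z : ns, nadd x (nadd y z) = nadd (nadd x y) z;
  add_comm : forall x y : ns, nadd x y = nadd y x;
  add_zero : forall x : ns, nadd nzero x = x;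
  add_opp : forall x : ns, nadd x (nscal (-1) x) = nzero;
  scal_one : forall x : ns, nscal 1 x = x;
  scal_assoc : forall a b (x : ns), nscal a (nscal b x) = nscal (a * b) x;
  scal_distr_l : forall a (x y : ns), nscal a (nadd x y) = nadd (nscal a x) (nscal a y);
  scal_distr_r : forall a b (x : ns), nscal (a + b) x = nadd (nscal a x) (nscal b x);
  norm_eq0 : forall x : ns, nnorm x = 0 -> x = nzero;
  norm_scal : forall a (x : ns), nnorm (nscal a x) = Rabs a * nnorm x;
  norm_triangle : forall x y : ns, nnorm (nadd x y) <= nnorm x + nnorm y }.

Record BL (X Y : NormedSpace) := {
  app :> X -> Y;
  app_add : forall x y, app (nadd x y) = nadd (app x) (app y);
  app_scal : forall a x, app (nscal a x) = nscal a (app x);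
  app_bounded : exists C, forall x, nnorm (app x) <= C * nnorm x }.

Arguments app {X Y}.

Section Ops.
Variables X Y : NormedSpace.

Lemma norm_zero_Y : nnorm (@nzero Y) = 0.
Proof.
  assert (H : @nzero Y = nscal 0 nzero).
  { pose proof (scal_distr_r Y 0 0 nzero) as E. rewrite Rplus_0_r in E.
    pose proof (add_opp Y (nscal 0 nzero)) as E2. rewrite <- E2.
    rewrite E at 1. rewrite <- add_assoc, add_opp, add_comm, add_zero. reflexivity. }
  rewrite H, norm_scal, Rabs_R0. ring.
Qed.

Lemma norm_nonneg_Y : forall y : Y, 0 <= nnorm y.
Proof.
  intro y. pose proof (norm_triangle Y y (nscal (-1) y)) as T.
  rewrite add_opp, norm_zero_Y, norm_scal in T.
  replace (Rabs (-1)) with 1 in T by (rewrite Rabs_left; lra). lra.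
Qed.

Lemma swap4 : forall a b c d : Y,
  nadd (nadd a b) (nadd c d) = nadd (nadd a c) (nadd b d).
Proof.
  intros. rewrite <- !add_assoc. f_equal. rewrite !add_assoc. f_equal.
  apply add_comm.
Qed.

Definition opzero : BL X Y.
Proof.
  refine {| app := fun _ => nzero |}.
  - intros. symmetry. apply add_zero.
  - intros. assert (H : @nzero Y = nscal 0 nzero).
    { pose proof (scal_distr_r Y 0 0 nzero) as E. rewrite Rplus_0_r in E.
      pose proof (add_opp Y (nscal 0 nzero)) as E2. rewrite <- E2.
      rewrite E at 1. rewrite <- add_assoc, add_opp, add_comm, add_zero. reflexivity. }
    rewrite H at 2. rewrite scal_assoc, Rmult_0_r. exact H.
  - exists 0. intros. rewrite norm_zero_Y. lra.
Defined.

Definition opadd (T S : BL X Y) : BL X Y.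
Proof.
  refine {| app := fun x => nadd (T x) (S x) |}.
  - intros. rewrite (app_add _ _ T), (app_add _ _ S). apply swap4.
  - intros. rewrite (app_scal _ _ T), (app_scal _ _ S), scal_distr_l. reflexivity.
  - destruct (app_bounded _ _ T) as [C1 H1]. destruct (app_bounded _ _ S) as [C2 H2].
    exists (C1 + C2). intros. eapply Rle_trans. apply norm_triangle.
    specialize (H1 x). specialize (H2 x). lra.
Defined.

Definition opscal (c : R) (T : BL X Y) : BL X Y.
Proof.
  refine {| app := fun x => nscal c (T x) |}.
  - intros. rewrite (app_add _ _ T), scal_distr_l. reflexivity.
  - intros. rewrite (app_scal _ _ T), !scal_assoc, Rmult_comm. reflexivity.
  - destruct (app_bounded _ _ T) as [C H]. exists (Rabs c * C). intros.
    rewrite norm_scal, Rmult_assoc. apply Rmult_le_compat_l. apply Rabs_pos. apply H.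
Defined.

Definition opnorm (T : BL X Y) : R :=
  Rsup (fun r => exists x : X, nnorm x <= 1 /\ r = nnorm (T x)).

End Ops.

Arguments opnorm {X Y}.

Definition Bspace (X Y : NormedSpace) : NStruct :=
  {| car := BL X Y; nzero := opzero X Y; nadd := opadd X Y;
     nscal := opscal X Y; nnorm := opnorm |}.

Definition is_functional (Z : NStruct) (f : Z -> R) : Prop :=
  (forall u v, f (nadd u v) = f u + f v) /\
  (forall a u, f (nscal a u) = a * f u) /\
  (exists C, forall u, Rabs (f u) <= C * nnorm u).

Definition dualnorm (Z : NStruct) (f : Z -> R) : R :=
  Rsup (fun r => exists z : Z, nnorm z <= 1 /\ r = Rabs (f z)).

Definition smooth (Z : NStruct) (x : Z) : Prop :=
  x <> nzero /\
  exists! f : Z -> R, is_functional Z f /\ dualnorm Z f = 1 /\ f x = nnorm x.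

Definition BJ (Z : NStruct) (x y : Z) : Prop :=
  forall l : R, nnorm (nadd x (nscal l y)) >= nnorm x.

Definition in_sphere (X : NormedSpace) (x : X) : Prop := nnorm x = 1.

Definition M_T {X Y : NormedSpace} (T : BL X Y) (x : X) : Prop :=
  in_sphere X x /\ nnorm (T x) = opnorm T.

From Stdlib Require Import Reals Lra ClassicalEpsilon Classical FunctionalExtensionality
  ProofIrrelevance.
From mathcomp Require Import classical_sets.
Open Scope R_scope.
Local Open Scope classical_set_scope.

(* For x in M_T and a norm-one functional g supporting T x, the map B |-> g (B x)
   is a norm-one functional supporting T.  If T is smooth all of these coincide;
   testing them on rank-one operators u |-> h(u) w forces M_T = {x0, -x0} and the
   smoothness of T x0, and James' characterisation of Birkhoff-James
   orthogonality (y _|_B z iff some norm-one functional supporting y vanishes at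
   z, a consequence of Hahn-Banach) turns T _|_B A into g (A x0) = 0.
   Conversely, under (iii) the functional B |-> g (B x0) vanishes wherever a
   functional F supporting T does; both take the value ||T|| at T, so F is
   B |-> g (B x0). *)

Lemma zorn_above (T : Type) (P : set (set T)) (A0 : set T) :
  P A0 ->
  (forall F : set (set T), (exists X, F X) -> F `<=` P -> total_on F subset ->
     P (\bigcup_(X in F) X)) ->
  exists A, A0 `<=` A /\ P A /\ forall B, A `<=` B -> P B -> B `<=` A.
Proof.
  intros HA0 Hchain.
  (* Zorn_bigcup also covers the empty chain, hence the detour through A |-> A \/ A0. *)
  set (P' := fun A : set T => P (fun t => A t \/ A0 t)).
  assert (Hunion : forall A, A0 `<=` A -> (fun t => A t \/ A0 t) = A).
  { intros A HA. apply boolp.predeqP. intro t. split; [intros [H|H]|]; auto. }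
  destruct (@Zorn_bigcup T P') as [A [HA Hmax]].
  - intros F HF Htot. unfold P'.
    destruct (classic (exists X, F X)) as [Hne|Hempty].
    + set (F' := fun Y : set T => exists2 X, F X & Y = (fun t => X t \/ A0 t)).
      replace (fun t => (\bigcup_(X in F) X) t \/ A0 t) with (\bigcup_(Y in F') Y).
      * apply Hchain.
        -- destruct Hne as [X HX]. exists (fun t => X t \/ A0 t), X; auto.
        -- intros Y [X HX ->]. apply HF, HX.
        -- intros Y1 Y2 [X1 H1 ->] [X2 H2 ->].
           destruct (Htot X1 X2 H1 H2) as [S|S]; [left|right];
             intros t [Ht|Ht]; auto.
      * apply boolp.predeqP. intro t. split.
        -- intros [Y [X HX ->] [Ht|Ht]]; [left; exists X|right]; auto.
        -- intros [[X HX Ht]|Ht].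
           ++ exists (fun s => X s \/ A0 s); [exists X; auto|left; exact Ht].
           ++ destruct Hne as [X HX].
              exists (fun s => X s \/ A0 s); [exists X; auto|right; exact Ht].
    + replace (fun t => (\bigcup_(X in F) X) t \/ A0 t) with A0; [exact HA0|].
      apply boolp.predeqP. intro t. split; [auto|]. intros [[X HX _]|Ht]; [|exact Ht].
      exfalso. apply Hempty. exists X. exact HX.
  - assert (Hsub : A0 `<=` A).
    { intros t Ht. apply NNPP. intro HnA.
      apply (Hmax (fun t => A t \/ A0 t)).
      - split; [intros s Hs; left; exact Hs|]. intro Hle.
        apply HnA, Hle. right. exact Ht.
      - unfold P'. replace (fun s => (A s \/ A0 s) \/ A0 s) with (fun s => A s \/ A0 s);
          [exact HA|]. apply boolp.predeqP. intro s. tauto. }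
    exists A. split; [exact Hsub|]. split.
    + unfold P' in HA. rewrite Hunion in HA; assumption.
    + intros B HAB HB t Ht. apply NNPP. intro HnA.
      apply (Hmax B).
      * split; [exact HAB|]. intro HBA. apply HnA, HBA, Ht.
      * unfold P'. rewrite Hunion; [exact HB|]. intros s Hs. apply HAB, Hsub, Hs.
Qed.

Section VectorAlgebra.
Variable Z : NormedSpace.
Implicit Types (u v w : Z).

Lemma nadd0r u : nadd u nzero = u.
Proof. rewrite add_comm. apply add_zero. Qed.

Lemma nadd_cancel_r u v w : nadd u w = nadd v w -> u = v.
Proof.
  intro E. rewrite <- (nadd0r u), <- (nadd0r v), <- (add_opp Z w), !add_assoc, E.
  reflexivity.
Qed.

Lemma nscal0l u : nscal 0 u = nzero.
Proof.
  apply (nadd_cancel_r _ _ (nscal 0 u)).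
  rewrite add_zero, <- scal_distr_r, Rplus_0_r. reflexivity.
Qed.

Lemma nscal0r a : nscal a (@nzero Z) = nzero.
Proof. rewrite <- (nscal0l nzero), scal_assoc, Rmult_0_r. reflexivity. Qed.

Lemma nnorm_opp u : nnorm (nscal (-1) u) = nnorm u.
Proof. rewrite norm_scal, Rabs_Zabs. simpl. ring. Qed.

Lemma nsub_eq0 u v : nadd u (nscal (-1) v) = nzero -> u = v.
Proof.
  intro E. apply (nadd_cancel_r _ _ (nscal (-1) v)). rewrite E. symmetry. apply add_opp.
Qed.

End VectorAlgebra.

Definition linear_form (Z : NStruct) (f : Z -> R) : Prop :=
  (forall u v, f (nadd u v) = f u + f v) /\ (forall a u, f (nscal a u) = a * f u).

Definition contractive (Z : NStruct) (f : Z -> R) : Prop :=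
  linear_form Z f /\ forall u, Rabs (f u) <= nnorm u.

Definition norming (Z : NStruct) (y : Z) (f : Z -> R) : Prop :=
  contractive Z f /\ f y = nnorm y.

Lemma linear_form_eq_of_ker (Z : NStruct) (f g : Z -> R) (t : Z) :
  linear_form Z f -> linear_form Z g -> f t = g t -> f t <> 0 ->
  (forall u, f u = 0 -> g u = 0) -> f = g.
Proof.
  intros [fD fZ] [gD gZ] Eft Hft Hker. extensionality u.
  set (k := f u / f t).
  assert (Hg : g (nadd u (nscal (- k) t)) = 0).
  { apply Hker. rewrite fD, fZ. unfold k. field. exact Hft. }
  rewrite gD, gZ, <- Eft in Hg. unfold k in Hg. field_simplify in Hg; [|exact Hft]. lra.
Qed.

Section HahnBanach.
Variables (Z : NormedSpace) (p : Z -> R).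
Hypothesis p_add : forall u v, p (nadd u v) <= p u + p v.
Hypothesis p_scal : forall a u, 0 < a -> p (nscal a u) = a * p u.

(* Partial linear functionals are handled through their graphs, which are
   linear subspaces of Z * R; a dominated one is automatically a graph. *)
Definition linear_graph (G : set (Z * R)) : Prop :=
  G (nzero, 0) /\
  (forall u r v s, G (u, r) -> G (v, s) -> G (nadd u v, r + s)) /\
  (forall a u r, G (u, r) -> G (nscal a u, a * r)).

Definition dominated (G : set (Z * R)) : Prop := forall u r, G (u, r) -> r <= p u.

Lemma sublinear_zero : p nzero = 0.
Proof.
  pose proof (p_scal 2 nzero) as H. rewrite nscal0r in H. lra.
Qed.

Lemma dominated_graph_functional G u r s :
  linear_graph G -> dominated G -> G (u, r) -> G (u, s) -> r = s.
Proof.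
  intros [_ [GD GZ]] Hdom.
  assert (Hle : forall r s, G (u, r) -> G (u, s) -> r <= s).
  { intros r' s' Hr Hs. pose proof (Hdom _ _ (GD _ _ _ _ Hr (GZ (-1) _ _ Hs))) as H.
    rewrite add_opp, sublinear_zero in H. lra. }
  intros Hr Hs. apply Rle_antisym; apply Hle; assumption.
Qed.

Lemma dominated_scaled_step G v c t d r : linear_graph G ->
  (forall d r, G (d, r) -> r + c <= p (nadd d v)) ->
  0 < t -> G (d, r) -> r + t * c <= p (nadd d (nscal t v)).
Proof.
  intros [_ [_ GZ]] Hc Ht Hdr.
  pose proof (Hc _ _ (GZ (/ t) _ _ Hdr)) as H.
  assert (E : nadd d (nscal t v) = nscal t (nadd (nscal (/ t) d) v)).
  { rewrite scal_distr_l, scal_assoc, Rinv_r, scal_one by lra. reflexivity. }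
  rewrite E, p_scal by exact Ht.
  apply (Rmult_le_compat_l t) in H; [|lra].
  replace (t * (/ t * r + c)) with (r + t * c) in H by (field; lra). exact H.
Qed.

Lemma extension_constant G v : linear_graph G -> dominated G ->
  exists c, (forall d r, G (d, r) -> r + c <= p (nadd d v)) /\
            (forall d r, G (d, r) -> r + - c <= p (nadd d (nscal (-1) v))).
Proof.
  intros HG Hdom. pose proof HG as [G0 [GD _]].
  (* r1 + r2 <= p (d1 + d2) <= p (d1 - v) + p (d2 + v) *)
  assert (Hsep : forall d1 r1 d2 r2, G (d1, r1) -> G (d2, r2) ->
            r1 - p (nadd d1 (nscal (-1) v)) <= p (nadd d2 v) - r2).
  { intros d1 r1 d2 r2 H1 H2. pose proof (Hdom _ _ (GD _ _ _ _ H1 H2)) as H.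
    replace (nadd d1 d2) with (nadd (nadd d1 (nscal (-1) v)) (nadd d2 v)) in H.
    - pose proof (p_add (nadd d1 (nscal (-1) v)) (nadd d2 v)). lra.
    - rewrite swap4, (add_comm _ (nscal (-1) v) v), add_opp, nadd0r. reflexivity. }
  set (E := fun x => exists d r, G (d, r) /\ x = r - p (nadd d (nscal (-1) v))).
  assert (Hb : bound E).
  { exists (p (nadd nzero v) - 0). intros x [d [r [Hdr ->]]]. apply Hsep; assumption. }
  assert (Hne : exists x, E x) by (eexists; exists nzero, 0; split; [exact G0|reflexivity]).
  destruct (completeness E Hb Hne) as [c [Hub Hlub]].
  exists c. split.
  - intros d r Hdr.
    assert (H : c <= p (nadd d v) - r).
    { apply Hlub. intros x [d' [r' [Hdr' ->]]]. apply Hsep; assumption. }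
    lra.
  - intros d r Hdr. assert (H : E (r - p (nadd d (nscal (-1) v)))) by (exists d, r; auto).
    apply Hub in H. lra.
Qed.

Lemma linear_graph_extension G v : linear_graph G -> dominated G ->
  exists G', G `<=` G' /\ linear_graph G' /\ dominated G' /\ exists c, G' (v, c).
Proof.
  intros HG Hdom. pose proof HG as [G0 [GD GZ]].
  destruct (extension_constant G v HG Hdom) as [c [Hplus Hminus]].
  set (G' := fun q : Z * R =>
    exists d r t, G (d, r) /\ q = (nadd d (nscal t v), r + t * c)).
  exists G'. split; [|split; [|split]].
  - intros [d r] Hdr. exists d, r, 0. rewrite nscal0l, nadd0r, Rmult_0_l, Rplus_0_r. auto.
  - split; [|split].
    + exists nzero, 0, 0. rewrite nscal0l, nadd0r, Rmult_0_l, Rplus_0_r. auto.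
    + intros u r w s [d1 [r1 [t1 [H1 E1]]]] [d2 [r2 [t2 [H2 E2]]]].
      injection E1 as -> ->. injection E2 as -> ->.
      exists (nadd d1 d2), (r1 + r2), (t1 + t2). split; [apply GD; assumption|].
      rewrite swap4, scal_distr_r. f_equal. ring.
    + intros a u r [d [r' [t [Hd E]]]]. injection E as -> ->.
      exists (nscal a d), (a * r'), (a * t). split; [apply GZ; assumption|].
      rewrite scal_distr_l, scal_assoc. f_equal. ring.
  - intros u r [d [r' [t [Hd E]]]]. injection E as -> ->.
    destruct (Rtotal_order t 0) as [Hneg|[->|Hpos]].
    + replace (nscal t v) with (nscal (- t) (nscal (-1) v))
        by (rewrite scal_assoc; f_equal; ring).
      replace (r' + t * c) with (r' + - t * - c) by ring.
      apply (dominated_scaled_step G); [exact HG|exact Hminus|lra|exact Hd].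
    + rewrite nscal0l, nadd0r, Rmult_0_l, Rplus_0_r. apply Hdom, Hd.
    + apply (dominated_scaled_step G); assumption.
  - exists c, nzero, 0, 1. rewrite scal_one, add_zero, Rmult_1_l, Rplus_0_l. auto.
Qed.

Lemma linear_graph_chain (F : set (set (Z * R))) : (exists X, F X) ->
  (forall X, F X -> linear_graph X /\ dominated X) -> total_on F subset ->
  linear_graph (\bigcup_(X in F) X) /\ dominated (\bigcup_(X in F) X).
Proof.
  intros [X0 HX0] HF Htot.
  assert (Hcommon : forall q1 q2, (\bigcup_(X in F) X) q1 -> (\bigcup_(X in F) X) q2 ->
            exists2 X, F X & X q1 /\ X q2).
  { intros q1 q2 [X1 H1 Hq1] [X2 H2 Hq2].
    destruct (Htot X1 X2 H1 H2) as [S|S]; [exists X2|exists X1]; auto. }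
  split; [split; [|split]|].
  - exists X0; [exact HX0|]. apply (HF X0 HX0).
  - intros u r v s Hu Hv. destruct (Hcommon _ _ Hu Hv) as [X HX [Hu' Hv']].
    exists X; [exact HX|]. apply (HF X HX); assumption.
  - intros a u r [X HX Hu]. exists X; [exact HX|]. apply (HF X HX), Hu.
  - intros u r [X HX Hu]. apply (HF X HX), Hu.
Qed.

Theorem hahn_banach (G0 : set (Z * R)) : linear_graph G0 -> dominated G0 ->
  exists f, linear_form Z f /\ (forall u, f u <= p u) /\
            (forall u r, G0 (u, r) -> f u = r).
Proof.
  intros HG0 Hdom0.
  destruct (zorn_above _ (fun G : set (Z * R) => linear_graph G /\ dominated G) G0)
    as [A [HA0 [[HA HdomA] Hmax]]].
  - split; assumption.
  - intros F Hne HF Htot. apply linear_graph_chain; assumption.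
  - assert (Htotal : forall v, exists r, A (v, r)).
    { intro v. destruct (linear_graph_extension A v HA HdomA) as [G' [HAG' [HG' [Hdom' [c Hc]]]]].
      exists c. apply (Hmax G' HAG' (conj HG' Hdom')), Hc. }
    set (f := fun v => proj1_sig (constructive_indefinite_description _ (Htotal v))).
    assert (Hf : forall v, A (v, f v)).
    { intro v. unfold f. destruct constructive_indefinite_description as [r Hr]. exact Hr. }
    assert (Hgraph : forall u r, A (u, r) -> f u = r).
    { intros u r Hur. exact (dominated_graph_functional A u _ _ HA HdomA (Hf u) Hur). }
    pose proof HA as [_ [AD AZ]].
    exists f. split; [split|split].
    + intros u v. apply Hgraph, AD; apply Hf.
    + intros a u. apply Hgraph, AZ, Hf.
    + intro u. apply HdomA, Hf.
    + intros u r Hur. apply Hgraph, HA0, Hur.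
Qed.

End HahnBanach.

Lemma Rsup_ub (E : R -> Prop) x : bound E -> E x -> x <= Rsup E.
Proof.
  intros Hb Hx. unfold Rsup. destruct excluded_middle_informative as [H|H].
  - destruct (completeness E (proj1 H) (proj2 H)) as [s [Hub Hlub]]. apply Hub, Hx.
  - exfalso. apply H. split; [exact Hb|exists x; exact Hx].
Qed.

Lemma Rsup_le (E : R -> Prop) M : (exists x, E x) -> (forall x, E x -> x <= M) -> Rsup E <= M.
Proof.
  intros Hne HM. unfold Rsup. destruct excluded_middle_informative as [H|H].
  - destruct (completeness E (proj1 H) (proj2 H)) as [s [Hub Hlub]]. apply Hlub; exact HM.
  - exfalso. apply H. split; [exists M; exact HM|exact Hne].
Qed.

(* Both the dual norm and the operator norm are suprema over the closed unit ball. *)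
Definition ball_sup (Z : NStruct) (q : Z -> R) : R :=
  Rsup (fun r => exists z : Z, nnorm z <= 1 /\ r = q z).

Section BallSup.
Variables (Z : NormedSpace) (q : Z -> R).
Hypothesis q_scal : forall a u, q (nscal a u) = Rabs a * q u.
Hypothesis q_bounded : exists C, forall u, q u <= C * nnorm u.

Lemma ball_sup_ub u : nnorm u <= 1 -> q u <= ball_sup Z q.
Proof.
  intro Hu. apply Rsup_ub; [|exists u; auto].
  destruct q_bounded as [C HC]. exists (Rmax C 0). intros r [z [Hz ->]].
  pose proof (norm_nonneg_Y Z z). pose proof (Rmax_l C 0). pose proof (Rmax_r C 0).
  specialize (HC z). nra.
Qed.

Lemma ball_sup_le M : (forall u, nnorm u <= 1 -> q u <= M) -> ball_sup Z q <= M.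
Proof.
  intro HM. apply Rsup_le; [|intros r [z [Hz ->]]; auto].
  exists (q nzero), nzero. rewrite norm_zero_Y. split; [lra|reflexivity].
Qed.

Lemma ball_sup_bound u : q u <= ball_sup Z q * nnorm u.
Proof.
  destruct (Req_dec (nnorm u) 0) as [H0|H0].
  - apply norm_eq0 in H0. subst u.
    assert (Hq0 : q nzero = 0) by (rewrite <- (nscal0l Z nzero), q_scal, Rabs_R0; ring).
    rewrite Hq0, norm_zero_Y. lra.
  - pose proof (norm_nonneg_Y Z u) as Hnn.
    assert (Hpos : 0 < / nnorm u) by (apply Rinv_0_lt_compat; lra).
    assert (H : q (nscal (/ nnorm u) u) <= ball_sup Z q).
    { apply ball_sup_ub. rewrite norm_scal, Rabs_right, Rinv_l by lra. lra. }
    rewrite q_scal, Rabs_right in H by lra.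
    apply (Rmult_le_compat_r (nnorm u)) in H; [|lra].
    replace (/ nnorm u * q u * nnorm u) with (q u) in H by (field; lra). exact H.
Qed.

End BallSup.

Section NormingFunctionals.
Variable Z : NormedSpace.

Lemma BJ_norming (y z : Z) : BJ Z y z -> exists f, norming Z y f /\ f z = 0.
Proof.
  intro Hbj.
  set (G0 := fun q : Z * R =>
    exists a b, q = (nadd (nscal a y) (nscal b z), a * nnorm y)).
  assert (HG0 : linear_graph Z G0).
  { split; [|split].
    - exists 0, 0. rewrite !nscal0l, add_zero, Rmult_0_l. reflexivity.
    - intros u r v s [a1 [b1 E1]] [a2 [b2 E2]]. injection E1 as -> ->. injection E2 as -> ->.
      exists (a1 + a2), (b1 + b2). rewrite swap4, !scal_distr_r. f_equal. ring.
    - intros c u r [a [b E]]. injection E as -> ->. exists (c * a), (c * b).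
      rewrite scal_distr_l, !scal_assoc. f_equal. ring. }
  assert (Hdom0 : dominated Z nnorm G0).
  { intros u r [a [b E]]. injection E as -> ->.
    pose proof (norm_nonneg_Y Z y) as Hy.
    destruct (Req_dec a 0) as [->|Ha].
    - rewrite Rmult_0_l. apply norm_nonneg_Y.
    - replace (nadd (nscal a y) (nscal b z)) with (nscal a (nadd y (nscal (b / a) z)))
        by (rewrite scal_distr_l, scal_assoc; f_equal; f_equal; field; exact Ha).
      rewrite norm_scal. pose proof (Hbj (b / a)) as H. pose proof (Rle_abs a).
      pose proof (Rabs_pos a). nra. }
  assert (Hhom : forall a (u : Z), 0 < a -> nnorm (nscal a u) = a * nnorm u).
  { intros a u Ha. rewrite norm_scal, Rabs_right by lra. reflexivity. }
  destruct (hahn_banach Z nnorm (norm_triangle Z) Hhom G0 HG0 Hdom0)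
    as [f [[fD fZ] [Hle Hext]]].
  exists f. split; [split; [split|]|].
  - split; assumption.
  - intro u. apply Rabs_le. split; [|apply Hle].
    pose proof (Hle (nscal (-1) u)) as H. rewrite fZ, nnorm_opp in H. lra.
  - apply Hext. exists 1, 0. rewrite scal_one, nscal0l, nadd0r, Rmult_1_l. reflexivity.
  - apply Hext. exists 0, 1. rewrite scal_one, nscal0l, add_zero, Rmult_0_l. reflexivity.
Qed.

Lemma norming_BJ (y z : Z) f : norming Z y f -> f z = 0 -> BJ Z y z.
Proof.
  intros [[[fD fZ] Hf] Hfy] Hfz l. pose proof (Hf (nadd y (nscal l z))) as H.
  rewrite fD, fZ, Hfz, Hfy, Rmult_0_r, Rplus_0_r in H.
  pose proof (Rle_abs (nnorm y)). lra.
Qed.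

Lemma norming_exists (y : Z) : exists f, norming Z y f.
Proof.
  destruct (BJ_norming y nzero) as [f [Hf _]]; [|exists f; exact Hf].
  intro l. rewrite nscal0r, nadd0r. lra.
Qed.

Lemma eq_of_contractive (u v : Z) : (forall f, contractive Z f -> f u = f v) -> u = v.
Proof.
  intro H. destruct (norming_exists (nadd u (nscal (-1) v))) as [f [Hf Hfuv]].
  pose proof Hf as [[fD fZ] _].
  apply nsub_eq0, norm_eq0. rewrite <- Hfuv, fD, fZ, (H f Hf). ring.
Qed.

Lemma support_iff_norming (y : Z) (f : Z -> R) : y <> nzero ->
  (is_functional Z f /\ dualnorm Z f = 1 /\ f y = nnorm y) <-> norming Z y f.
Proof.
  intro Hy. assert (Hypos : 0 < nnorm y).
  { pose proof (norm_nonneg_Y Z y). destruct (Req_dec (nnorm y) 0) as [E|E]; [|lra].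
    exfalso. apply Hy, norm_eq0, E. }
  split.
  - intros [[fD [fZ [C HC]]] [Hd Hfy]]. split; [split; [split; assumption|]|exact Hfy].
    intro u. rewrite <- (Rmult_1_l (nnorm u)), <- Hd.
    apply (ball_sup_bound Z (fun u => Rabs (f u))).
    + intros a w. rewrite fZ. apply Rabs_mult.
    + exists C. exact HC.
  - intros [[[fD fZ] Hf] Hfy]. split; [|split; [|exact Hfy]].
    + split; [exact fD|split; [exact fZ|]]. exists 1. intro u. rewrite Rmult_1_l. apply Hf.
    + apply Rle_antisym.
      * apply ball_sup_le. intros u Hu. specialize (Hf u). lra.
      * assert (Hinv : 0 < / nnorm y) by (apply Rinv_0_lt_compat; exact Hypos).
        assert (Hunit : nnorm (nscal (/ nnorm y) y) <= 1).
        { rewrite norm_scal, Rabs_right, Rinv_l by lra. lra. }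
        replace 1 with (Rabs (f (nscal (/ nnorm y) y))).
        -- refine (ball_sup_ub Z (fun u => Rabs (f u)) _ _ Hunit).
           exists 1. intro u. rewrite Rmult_1_l. apply Hf.
        -- rewrite fZ, Hfy, Rinv_l, Rabs_R1 by lra. reflexivity.
Qed.

Lemma smoothE (y : Z) :
  smooth Z y <-> y <> nzero /\ forall f g, norming Z y f -> norming Z y g -> f = g.
Proof.
  split.
  - intros [Hy [f0 [_ Huniq]]]. split; [exact Hy|]. intros f g Hf Hg.
    rewrite <- (Huniq f), <- (Huniq g); [reflexivity| |];
      apply support_iff_norming; assumption.
  - intros [Hy Huniq]. split; [exact Hy|].
    destruct (norming_exists y) as [f Hf]. exists f. split.
    + apply support_iff_norming; assumption.
    + intros g Hg. apply Huniq; [exact Hf|]. apply support_iff_norming in Hg; assumption.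
Qed.

End NormingFunctionals.

Section Operators.
Variables X Y : NormedSpace.
Implicit Types A B : BL X Y.

Lemma BL_ext A B : (forall x, A x = B x) -> A = B.
Proof.
  destruct A as [a aD aZ aC], B as [b bD bZ bC]. simpl. intro H.
  assert (a = b) by (extensionality x; apply H). subst b.
  f_equal; apply proof_irrelevance.
Qed.

Lemma app_zero A : A nzero = nzero.
Proof. rewrite <- (nscal0l X nzero), app_scal, nscal0l. reflexivity. Qed.

Lemma opnorm_ub A x : nnorm x <= 1 -> nnorm (A x) <= opnorm A.
Proof. exact (ball_sup_ub X (fun x => nnorm (A x)) (app_bounded _ _ A) x). Qed.

Lemma opnorm_le A M : (forall x, nnorm x <= 1 -> nnorm (A x) <= M) -> opnorm A <= M.
Proof. exact (ball_sup_le X (fun x => nnorm (A x)) M). Qed.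

Lemma opnorm_bound A x : nnorm (A x) <= opnorm A * nnorm x.
Proof.
  apply (ball_sup_bound X (fun x => nnorm (A x))); [|exact (app_bounded _ _ A)].
  intros a u. simpl. rewrite app_scal. apply norm_scal.
Qed.

Lemma opnorm_nonneg A : 0 <= opnorm A.
Proof.
  pose proof (opnorm_ub A nzero) as H. rewrite app_zero, !norm_zero_Y in H. lra.
Qed.

Lemma opnorm_add_le A B : opnorm (opadd X Y A B) <= opnorm A + opnorm B.
Proof.
  apply opnorm_le. intros x Hx. simpl. eapply Rle_trans; [apply norm_triangle|].
  pose proof (opnorm_ub A x Hx). pose proof (opnorm_ub B x Hx). lra.
Qed.

Lemma opnorm_scal c A : opnorm (opscal X Y c A) = Rabs c * opnorm A.
Proof.
  apply Rle_antisym.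
  - apply opnorm_le. intros x Hx. simpl. rewrite norm_scal.
    apply Rmult_le_compat_l; [apply Rabs_pos|apply opnorm_ub, Hx].
  - destruct (Req_dec c 0) as [->|Hc].
    + rewrite Rabs_R0, Rmult_0_l. apply opnorm_nonneg.
    + pose proof (Rabs_pos_lt c Hc) as Hcpos.
      assert (H : opnorm A <= opnorm (opscal X Y c A) / Rabs c).
      { apply opnorm_le. intros x Hx. pose proof (opnorm_ub (opscal X Y c A) x Hx) as H.
        simpl in H. rewrite norm_scal in H.
        apply (Rmult_le_reg_l (Rabs c)); [exact Hcpos|].
        replace (Rabs c * (opnorm (opscal X Y c A) / Rabs c)) with (opnorm (opscal X Y c A))
          by (field; lra). exact H. }
      apply (Rmult_le_compat_l (Rabs c)) in H; [|lra].
      replace (Rabs c * (opnorm (opscal X Y c A) / Rabs c)) with (opnorm (opscal X Y c A))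
        in H by (field; lra). exact H.
Qed.

Lemma opnorm_eq0 A : opnorm A = 0 -> A = opzero X Y.
Proof.
  intro H. apply BL_ext. intro x. simpl. apply norm_eq0.
  pose proof (opnorm_bound A x). pose proof (norm_nonneg_Y Y (A x)). rewrite H in *. lra.
Qed.

Definition Bnormed : NormedSpace.
Proof.
  refine {| ns := Bspace X Y; norm_eq0 := opnorm_eq0; norm_scal := opnorm_scal;
            norm_triangle := opnorm_add_le |};
    intros; apply BL_ext; intro; simpl.
  - apply add_assoc.
  - apply add_comm.
  - apply add_zero.
  - apply add_opp.
  - apply scal_one.
  - apply scal_assoc.
  - apply scal_distr_l.
  - apply scal_distr_r.
Defined.

Lemma opnorm_pos A : A <> opzero X Y -> 0 < opnorm A.
Proof.
  intro HA. pose proof (opnorm_nonneg A). destruct (Req_dec (opnorm A) 0) as [E|E]; [|lra].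
  exfalso. apply HA, opnorm_eq0, E.
Qed.

Definition rank_one (h : X -> R) (Hh : contractive X h) (w : Y) : BL X Y.
Proof.
  refine {| app := fun u => nscal (h u) w |}.
  - intros u v. destruct Hh as [[hD _] _]. rewrite hD. apply scal_distr_r.
  - intros a u. destruct Hh as [[_ hZ] _]. rewrite hZ. symmetry. apply scal_assoc.
  - exists (nnorm w). intro u. destruct Hh as [_ hb]. rewrite norm_scal.
    pose proof (hb u). pose proof (norm_nonneg_Y Y w). nra.
Defined.

End Operators.

Lemma unit_scal_cases (Z : NormedSpace) (x0 x : Z) (k : R) :
  nnorm x0 = 1 -> nnorm x = 1 -> x0 = nscal k x -> x = x0 \/ x = nscal (-1) x0.
Proof.
  intros Hx0 Hx E.
  assert (Hk : k = 1 \/ k = -1).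
  { rewrite E, norm_scal, Hx in Hx0.
    destruct (Rcase_abs k); [rewrite Rabs_left in Hx0|rewrite Rabs_right in Hx0]; lra. }
  destruct Hk as [ -> | -> ].
  - left. rewrite E, scal_one. reflexivity.
  - right. rewrite E, scal_assoc. replace (-1 * -1) with 1 by ring.
    rewrite scal_one. reflexivity.
Qed.

Section Smoothness.
Variables (X Y : NormedSpace) (T : BL X Y).

Lemma M_T_opp x : M_T T x -> M_T T (nscal (-1) x).
Proof.
  intros [Hx HTx]. unfold M_T, in_sphere. rewrite app_scal, !nnorm_opp. auto.
Qed.

Lemma norming_eval x g : M_T T x -> norming Y (T x) g ->
  norming (Bnormed X Y) T (fun B => g (B x)).
Proof.
  intros [Hx HTx] [[[gD gZ] Hg] HgT].
  split; [split; [split|]|].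
  - intros A B. apply gD.
  - intros a A. apply gZ.
  - intro B. change (Rabs (g (B x)) <= opnorm B).
    pose proof (opnorm_bound X Y B x) as H. unfold in_sphere in Hx. rewrite Hx in H.
    specialize (Hg (B x)). lra.
  - change (g (T x) = opnorm T). rewrite HgT. exact HTx.
Qed.

Lemma BJ_op_of_BJ_at x0 (A : BL X Y) : M_T T x0 -> BJ Y (T x0) (A x0) -> BJ (Bspace X Y) T A.
Proof.
  intros [Hx0 HTx0] Hbj l. change (opnorm (opadd X Y T (opscal X Y l A)) >= opnorm T).
  pose proof (opnorm_ub X Y (opadd X Y T (opscal X Y l A)) x0) as H. simpl in H.
  unfold in_sphere in Hx0. specialize (Hbj l). rewrite <- HTx0. lra.
Qed.

Section SmoothOperator.
Hypothesis T_smooth : smooth (Bspace X Y) T.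

Lemma smooth_op_pos : 0 < opnorm T.
Proof. apply opnorm_pos. exact (proj1 T_smooth). Qed.

Lemma smooth_op_eval_eq x x' g g' : M_T T x -> M_T T x' ->
  norming Y (T x) g -> norming Y (T x') g' -> forall B : BL X Y, g (B x) = g' (B x').
Proof.
  intros Hx Hx' Hg Hg'. apply (smoothE (Bnormed X Y)) in T_smooth as [_ Huniq].
  apply equal_f, Huniq; apply norming_eval; assumption.
Qed.

Lemma smooth_op_M_T x0 x : M_T T x0 -> M_T T x -> x = x0 \/ x = nscal (-1) x0.
Proof.
  intros Hx0 Hx.
  destruct (norming_exists Y (T x0)) as [g0 Hg0].
  destruct (norming_exists Y (T x)) as [g Hg].
  pose proof smooth_op_pos as Hpos.
  set (k := g (T x0) / opnorm T).
  (* on u |-> h(u) T x0 the two support functionals give h(x) g(T x0) = h(x0) ||T|| *)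
  assert (Ex0 : x0 = nscal k x).
  { apply eq_of_contractive. intros h Hh.
    pose proof (smooth_op_eval_eq x x0 g g0 Hx Hx0 Hg Hg0 (rank_one X Y h Hh (T x0))) as E.
    simpl in E. destruct Hh as [[_ hZ] _]. destruct Hg as [[[_ gZ] _] _].
    destruct Hg0 as [[[_ g0Z] _] g0T]. destruct Hx0 as [_ HTx0].
    rewrite gZ, g0Z, g0T, HTx0 in E. rewrite hZ. unfold k.
    apply (Rmult_eq_reg_r (opnorm T)); [|lra]. rewrite <- E. field. lra. }
  exact (unit_scal_cases X x0 x k (proj1 Hx0) (proj1 Hx) Ex0).
Qed.

Lemma smooth_op_at x0 : M_T T x0 -> smooth Y (T x0).
Proof.
  intro Hx0. pose proof smooth_op_pos as Hpos. pose proof Hx0 as [Hnx0 HTx0].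
  apply smoothE. split.
  - intro E. rewrite E, norm_zero_Y in HTx0. lra.
  - intros g g' Hg Hg'. extensionality w.
    destruct (norming_exists X x0) as [h [Hh hx0]].
    pose proof (smooth_op_eval_eq x0 x0 g g' Hx0 Hx0 Hg Hg' (rank_one X Y h Hh w)) as E.
    simpl in E. unfold in_sphere in Hnx0. rewrite hx0, Hnx0, scal_one in E. exact E.
Qed.

Lemma smooth_op_BJ x0 (A : BL X Y) : M_T T x0 -> BJ (Bspace X Y) T A -> BJ Y (T x0) (A x0).
Proof.
  intros Hx0 Hbj.
  destruct (BJ_norming (Bnormed X Y) T A Hbj) as [F [HF HFA]].
  destruct (norming_exists Y (T x0)) as [g Hg].
  apply (smoothE (Bnormed X Y)) in T_smooth as [_ Huniq].
  rewrite (Huniq F (fun B => g (B x0)) HF (norming_eval x0 g Hx0 Hg)) in HFA.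
  exact (norming_BJ Y _ _ g Hg HFA).
Qed.

End SmoothOperator.

Lemma smooth_op_of_smooth_at x0 : T <> opzero X Y -> M_T T x0 -> smooth Y (T x0) ->
  (forall A : BL X Y, BJ (Bspace X Y) T A -> BJ Y (T x0) (A x0)) -> smooth (Bspace X Y) T.
Proof.
  intros hT Hx0 Hsm Hiii.
  pose proof (opnorm_pos X Y T hT) as Hpos.
  apply (smoothE Y) in Hsm as [_ Huniq].
  destruct (norming_exists Y (T x0)) as [g Hg].
  pose proof (norming_eval x0 g Hx0 Hg) as HE.
  assert (Hall : forall F, norming (Bnormed X Y) T F -> F = (fun B => g (B x0))).
  { intros F HF. apply (linear_form_eq_of_ker (Bnormed X Y) _ _ T).
    - exact (proj1 (proj1 HF)).
    - exact (proj1 (proj1 HE)).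
    - rewrite (proj2 HF), (proj2 HE). reflexivity.
    - rewrite (proj2 HF). change (opnorm T <> 0). lra.
    - intros B HFB. apply (norming_BJ (Bnormed X Y) T B F HF), Hiii in HFB.
      destruct (BJ_norming Y _ _ HFB) as [g' [Hg' Hg'B]].
      rewrite (Huniq g g' Hg Hg'). exact Hg'B. }
  apply (smoothE (Bnormed X Y)). split; [exact hT|].
  intros F F' HF HF'. rewrite (Hall F HF), (Hall F' HF'). reflexivity.
Qed.

End Smoothness.

Theorem theorem3p3 (X Y : NormedSpace) (T : BL X Y)
  (hT : T <> opzero X Y) (hM : exists x, M_T T x) :
  smooth (Bspace X Y) T <->
  exists x0 : X,
    in_sphere X x0 /\
    (forall x, M_T T x <-> (x = x0 \/ x = nscal (-1) x0)) /\
    smooth Y (T x0) /\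
    (forall A : BL X Y, BJ (Bspace X Y) T A <-> BJ Y (T x0) (A x0)).
Proof.
  split.
  - intro Hs. destruct hM as [x0 Hx0].
    exists x0. split; [exact (proj1 Hx0)|split; [|split]].
    + intro x. split; [exact (smooth_op_M_T X Y T Hs x0 x Hx0)|].
      intros [ -> | -> ]; [exact Hx0|exact (M_T_opp X Y T x0 Hx0)].
    + exact (smooth_op_at X Y T Hs x0 Hx0).
    + intro A. split; [exact (smooth_op_BJ X Y T Hs x0 A Hx0)|].
      exact (BJ_op_of_BJ_at X Y T x0 A Hx0).
  - intros [x0 [_ [HM [Hsm Hiii]]]].
    apply (smooth_op_of_smooth_at X Y T x0 hT); [|exact Hsm|intro A; apply Hiii].
    apply HM. left. reflexivity.
Qed.
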